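(* Fix a nonnegative integer $n$ and define \[ R_n(a,b,c)=(1-a)_n(b)_n\,{}_4F_3\!\left(\left.{-n,a,a-c-n,c \atop \frac{a-n}{2},\frac{1+a-n}{2},b}\right| \frac{1}{4}\right). \] The group of transformations of $(a,b,c)$ generated by $(a,b,c)\mapsto(a,b,a-c-n)$ and $(a,b,c)\mapsto(1+c-b,1+c-a,c)$, both of which leave $R_n$ invariant, is isomorphic to $S_3$, and yields the six invariances (valid whenever both sides are defined) \begin{align*} R_n(a,b,c)&=R_n(a,b,c)=R_n(a,b,a-c-n)=R_n(1+c-b,1+c-a,c)=R_n(1+c-b,1+c-a,1-b-n)\\ &=R_n(1+a-b-c-n,1-c-n,a-c-n)=R_n(1+a-b-c-n,1-c-n,1-b-n). \end{align*} Moreover the function \[ V_n(x,y,z)=R_n\!\left(x-y-z,\ \frac{2+3x-y-z-n}{2},\ \frac{x+y-3z-n}{2}\right) \] is invariant under all six permutations of $x,y,z$.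
   Context: For $a\in\mathbb{C}$, $(a)_0=1$ and $(a)_k=a(a+1)\cdots(a+k-1)$ for $k\ge1$. The hypergeometric series is ${}_rF_s\!\left(\left.{\alpha_1,\ldots,\alpha_r\atop \beta_1,\ldots,\beta_s}\right|z\right)=\sum_{k\ge0}\frac{(\alpha_1)_k\cdots(\alpha_r)_k}{k!(\beta_1)_k\cdots(\beta_s)_k}z^k$, with no lower parameter zero or a negative integer; when an upper parameter is $-n$ it is a finite sum over $0\le k\le n$. *)

From HB Require Import structures.
From mathcomp Require Import all_boot all_order all_fingroup all_algebra.
From mathcomp Require Import complex.
From mathcomp Require Import reals.
Set Implicit Arguments. Unset Strict Implicit. Unset Printing Implicit Defensive.
Import Order.TTheory GRing.Theory Num.Theory.
Local Open Scope ring_scope.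
Local Open Scope complex_scope.

Section Defs.
Variable R : realType.
Local Notation C := R[i].

Definition poch (a : C) (k : nat) : C := \prod_(i < k) (a + i%:R).

(* When an upper parameter is -N
   this is exactly the rFs series of the paper (all further terms vanish). *)
Definition hypT (N : nat) (us ls : seq C) (z : C) : C :=
  \sum_(k < N.+1)
     (\prod_(u <- us) poch u k) / (k`!%:R * \prod_(l <- ls) poch l k) * z ^+ k.

Definition nonpos_int (a : C) : Prop := exists m : nat, a = - m%:R.

Definition lower_ok (ls : seq C) : Prop := forall l, l \in ls -> ~ nonpos_int l.

Definition lowerR (n : nat) (a b c : C) : seq C :=
  [:: (a - n%:R) / 2; (1 + a - n%:R) / 2; b].

Definition Rn (n : nat) (a b c : C) : C :=
  poch (1 - a) n * poch b n *
  hypT n [:: - n%:R; a; a - c - n%:R; c] (lowerR n a b c) (1 / 4).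

Definition Rn_def (n : nat) (a b c : C) : Prop := lower_ok (lowerR n a b c).

Definition Vargs (n : nat) (x y z : C) : C * C * C :=
  (x - y - z, (2 + 3 * x - y - z - n%:R) / 2, (x + y - 3 * z - n%:R) / 2).

Definition Vn (n : nat) (x y z : C) : C :=
  let: (a, b, c) := Vargs n x y z in Rn n a b c.

Definition Vn_def (n : nat) (x y z : C) : Prop :=
  let: (a, b, c) := Vargs n x y z in Rn_def n a b c.

Definition T1 (n : nat) (t : C * C * C) : C * C * C :=
  let: (a, b, c) := t in (a, b, a - c - n%:R).
Definition T2 (n : nat) (t : C * C * C) : C * C * C :=
  let: (a, b, c) := t in (1 + c - b, 1 + c - a, c).

(* The group generated by T1 and T2 under composition.  Since T1, T2 are
   involutions, the generated monoid is the generated group. *)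
Inductive gen_T (n : nat) : (C * C * C -> C * C * C) -> Prop :=
  | gen_id : gen_T n id
  | gen_1 g : gen_T n g -> gen_T n (T1 n \o g)
  | gen_2 g : gen_T n g -> gen_T n (T2 n \o g).

End Defs.

(* In the coordinates u = c, v = a - c - n, w = 1 - b - n, the reflection and
   duplication formulas for Pochhammer symbols turn R_n(a, b, c) into
     F(u, v, w) = sum_k C(n, k) (u)_k (v)_k (w)_(n-k) (u + v + 2k)_(n-k),
   which is obviously symmetric in u, v.  Expanding (u + v + 2k)_(n-k) by
   Chu--Vandermonde gives a double sum over k + j <= n of the trinomial
   coefficient times (u)_(k+j) (v)_(n-j) (w)_(n-k), which is symmetric in v, w.
   So F is symmetric; T1 and T2 are the transpositions u <-> v and v <-> w, so
   they generate S_3 acting by permutation of (u, v, w), and all six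
   invariances are permutations of the arguments of F.  For V_n one finds
   (u, v, w) = (g z, g y, g x) with g t = (x + y + z - 4t - n)/2. *)

From HB Require Import structures.
From mathcomp Require Import all_boot all_order all_fingroup all_algebra.
From mathcomp Require Import complex.
From mathcomp Require Import reals.
From mathcomp Require Import ring zify.
From Stdlib Require Import FunctionalExtensionality.
Import Order.TTheory GRing.Theory Num.Theory.
Local Open Scope ring_scope.
Local Open Scope complex_scope.
Set Implicit Arguments. Unset Strict Implicit.

Section Pochhammer.
Variable R : realType.
Local Notation C := R[i].
Implicit Types (x y : C) (k m : nat).

Lemma poch0 x : poch x 0 = 1.
Proof. by rewrite /poch big_ord0. Qed.

Lemma pochS x k : poch x k.+1 = poch x k * (x + k%:R).
Proof. by rewrite /poch big_ord_recr. Qed.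

Lemma pochSl x k : poch x k.+1 = x * poch (x + 1) k.
Proof.
rewrite /poch big_ord_recl /= addr0; congr (_ * _).
by apply: eq_bigr => i _; rewrite /bump /= add1n -addn1 natrD; ring.
Qed.

Lemma pochD x m k : poch x (m + k) = poch x m * poch (x + m%:R) k.
Proof.
elim: k => [|k IHk]; first by rewrite addn0 poch0 mulr1.
by rewrite addnS !pochS IHk natrD -mulrA addrA.
Qed.

Lemma poch1 m : poch 1 m = m`!%:R :> C.
Proof.
elim: m => [|m IHm]; first by rewrite poch0.
by rewrite pochS IHm factS natrM -addn1 natrD; ring.
Qed.

Lemma poch_reflect x m : poch (1 - x - m%:R) m = (-1) ^+ m * poch x m.
Proof.
elim: m x => [|m IHm] x; first by rewrite !poch0 expr0 mulr1.
rewrite pochSl pochS.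
have -> : 1 - x - m.+1%:R + 1 = 1 - x - m%:R by rewrite -addn1 natrD; ring.
by rewrite IHm exprS; ring.
Qed.

Lemma poch_double x k :
  poch (x / 2) k * poch ((1 + x) / 2) k * 4 ^+ k = poch x (k + k).
Proof.
elim: k => [|k IHk]; first by rewrite !poch0 expr0 !mulr1.
rewrite addSn addnS !pochS -IHk exprS.
have -> : (k + k)%:R = 2 * k%:R :> C by rewrite natrD; ring.
have -> : (k + k).+1%:R = 2 * k%:R + 1 :> C by rewrite -addn1 !natrD; ring.
by field.
Qed.

Lemma poch_neq0 x k : ~ nonpos_int x -> poch x k != 0.
Proof.
move=> x_nonpos; elim: k => [|k IHk]; first by rewrite poch0 oner_neq0.
rewrite pochS mulf_neq0 //; apply/eqP => xk0; apply: x_nonpos; exists k.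
by apply/eqP; rewrite -addr_eq0 xk0.
Qed.

Lemma poch_Nnat m k : (k <= m)%N ->
  poch (- m%:R) k = (-1) ^+ k * 'C(m, k)%:R * k`!%:R :> C.
Proof.
move=> le_km.
have -> : poch (- m%:R) k = (-1) ^+ k * poch ((m - k)%:R + 1) k :> C.
  rewrite -poch_reflect; congr poch; rewrite natrB //; ring.
have fact_neq0 : (m - k)`!%:R != 0 :> C by rewrite pnatr_eq0 -lt0n fact_gt0.
have fact_m : (m - k)`!%:R * poch ((m - k)%:R + 1) k = m`!%:R :> C.
  by rewrite -!poch1 -[in RHS](subnK le_km) pochD [1 + _]addrC.
apply: (mulIf fact_neq0).
by rewrite -[LHS]mulrA [X in _ * X = _]mulrC fact_m -!mulrA -!natrM bin_fact.
Qed.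

Lemma pochDn x y m :
  poch (x + y) m = \sum_(j < m.+1) 'C(m, j)%:R * poch x j * poch y (m - j).
Proof.
elim: m => [|m IHm]; first by rewrite big_ord1 /= !poch0 bin0; ring.
transitivity (\sum_(j < m.+1) 'C(m, j)%:R * poch x j.+1 * poch y (m - j)
            + \sum_(j < m.+1) 'C(m, j)%:R * poch x j * poch y (m.+1 - j)).
  rewrite pochS IHm mulr_suml -big_split; apply: eq_bigr => j _ /=.
  have le_jm : (j <= m)%N by rewrite -ltnS.
  by rewrite subSn // !pochS natrB //; ring.
rewrite [RHS]big_ord_recl [X in _ + X]big_ord_recl /= !bin0 !subn0 !poch0 addrCA.
congr (_ + _).
under [RHS]eq_bigr => i _ do rewrite /bump /= add1n binS natrD subSS !mulrDl.
rewrite big_split /= addrC; congr (_ + _).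
rewrite big_ord_recr /= bin_small // !mul0r addr0.
by apply: eq_bigr => i _; rewrite /bump /= add1n subSS.
Qed.

End Pochhammer.

Lemma bin_trinomial_fact m k j : (k + j <= m)%N ->
  ('C(m, k) * 'C(m - k, j) * (k`! * j`! * (m - k - j)`!) = m`!)%N.
Proof.
move=> le_kj_m.
rewrite -(bin_fact (_ : k <= m)%N); last lia.
rewrite -(bin_fact (_ : j <= m - k)%N); last lia.
ring.
Qed.

Lemma mul_bin_subC m k j : (k + j <= m)%N ->
  ('C(m, k) * 'C(m - k, j) = 'C(m, j) * 'C(m - j, k))%N.
Proof.
move=> le_kj_m; apply/eqP.
rewrite -(@eqn_pmul2r (k`! * j`! * (m - k - j)`!)) ?muln_gt0 ?fact_gt0 //.
rewrite bin_trinomial_fact // -(@bin_trinomial_fact m j k) 1?addnC //.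
by rewrite subnAC (mulnC j`!).
Qed.

Section SymmetricSum.
Variables (R : realType) (n : nat).
Local Notation C := R[i].
Implicit Types (u v w : C).

Definition Fn u v w : C := \sum_(k < n.+1)
  'C(n, k)%:R * poch u k * poch v k * poch w (n - k) * poch (u + v + (k + k)%:R) (n - k).

Definition Hn u v w : C := \sum_(k < n.+1) \sum_(j < n.+1)
  if (k + j <= n)%N then ('C(n, k) * 'C(n - k, j))%:R * poch u (k + j)
    * poch v (n - j) * poch w (n - k) else 0.

Lemma Fn_Hn u v w : Fn u v w = Hn u v w.
Proof.
apply: eq_bigr => k _.
have le_kn : (k <= n)%N by rewrite -ltnS.
have -> : u + v + (k + k)%:R = (u + k%:R) + (v + k%:R) by rewrite natrD; ring.
rewrite pochDn mulr_sumr.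
rewrite (big_ord_widen n.+1 (fun j =>
    'C(n, k)%:R * poch u k * poch v k * poch w (n - k) *
    ('C(n - k, j)%:R * poch (u + k%:R) j * poch (v + k%:R) (n - k - j))))
  ?ltnS ?leq_subr //.
rewrite big_mkcond; apply: eq_bigr => j _.
have -> : (j < (n - k).+1)%N = (k + j <= n)%N by apply/idP/idP; lia.
case: ifP => // le_kj_n.
have -> : (n - j = k + (n - k - j))%N by lia.
by rewrite !pochD natrM; ring.
Qed.

Lemma Hn_sym23 u v w : Hn u v w = Hn u w v.
Proof.
rewrite /Hn exchange_big /=; apply: eq_bigr => k _; apply: eq_bigr => j _.
rewrite addnC; case: ifP => // le_jk_n.
by rewrite mul_bin_subC 1?addnC //; ring.
Qed.

Lemma Fn_sym12 u v w : Fn u v w = Fn v u w.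
Proof. by apply: eq_bigr => k _; rewrite (addrC u v); ring. Qed.

Lemma Fn_sym23 u v w : Fn u v w = Fn u w v.
Proof. by rewrite !Fn_Hn Hn_sym23. Qed.

End SymmetricSum.

Section RnTerms.
Variables (R : realType) (n : nat).
Local Notation C := R[i].
Variable k : nat.
Hypothesis le_kn : (k <= n)%N.

Lemma poch_ratio_duplication (a : C) :
  poch ((a - n%:R) / 2) k != 0 -> poch ((1 + a - n%:R) / 2) k != 0 ->
  poch (1 - a) n * poch a k
    / (poch ((a - n%:R) / 2) k * poch ((1 + a - n%:R) / 2) k * 4 ^+ k)
  = (-1) ^+ n * poch (a - n%:R + (k + k)%:R) (n - k).
Proof.
move=> p1_neq0 p2_neq0.
have double_neq0 : poch (a - n%:R) (k + k) != 0.
  by rewrite -poch_double addrA !mulf_neq0 // expf_neq0 // pnatr_eq0.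
rewrite -[1 + a - n%:R]addrA poch_double.
have -> : poch (1 - a) n = (-1) ^+ n * poch (a - n%:R) n.
  by rewrite -poch_reflect; congr poch; ring.
rewrite -[(-1) ^+ n * _ * _]mulrA.
have -> : poch (a - n%:R) n * poch a k
          = poch (a - n%:R) (k + k) * poch (a - n%:R + (k + k)%:R) (n - k).
  rewrite -pochD (_ : (k + k + (n - k) = n + k)%N); last lia.
  by rewrite pochD; congr (_ * poch _ _); ring.
by field.
Qed.

Lemma poch_ratio_reflect (b : C) : poch b k != 0 ->
  poch b n / poch b k = (-1) ^+ (n - k) * poch (1 - b - n%:R) (n - k).
Proof.
move=> pb_neq0; rewrite -{1}(subnKC le_kn) pochD mulrAC divff // mul1r.
by rewrite -poch_reflect; congr poch; rewrite natrB //; ring.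
Qed.

Lemma poch_ratio_Nnat : poch (- n%:R) k / k`!%:R = (-1) ^+ k * 'C(n, k)%:R :> C.
Proof. by rewrite poch_Nnat // mulfK // pnatr_eq0 -lt0n fact_gt0. Qed.

Lemma sign_prod_eq1 : (-1) ^+ n * (-1) ^+ (n - k) * (-1) ^+ k = 1 :> C.
Proof. by rewrite -mulrA -exprD subnK // -exprMn mulrNN mulr1 expr1n. Qed.

End RnTerms.

Lemma Rn_Fn (R : realType) (n : nat) (a b c : R[i]) :
  Rn_def n a b c -> Rn n a b c = Fn n c (a - c - n%:R) (1 - b - n%:R).
Proof.
move=> Rabc; rewrite /Rn /hypT /Fn mulr_sumr; apply: eq_bigr => -[k /= lt_kn] _.
have le_kn : (k <= n)%N by rewrite -ltnS.
rewrite /lowerR !big_cons !big_nil !mulr1.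
have [p1_neq0 p2_neq0 pb_neq0] : [/\ poch ((a - n%:R) / 2) k != 0,
    poch ((1 + a - n%:R) / 2) k != 0 & poch b k != 0].
  by split; apply/poch_neq0/Rabc; rewrite !inE eqxx ?orbT.
have fact_neq0 : k`!%:R != 0 :> R[i] by rewrite pnatr_eq0 -lt0n fact_gt0.
have four_neq0 : 4 ^+ k != 0 :> R[i] by rewrite expf_neq0 // pnatr_eq0.
transitivity (
    (poch (1 - a) n * poch a k
       / (poch ((a - n%:R) / 2) k * poch ((1 + a - n%:R) / 2) k * 4 ^+ k))
    * (poch b n / poch b k) * (poch (- n%:R) k / k`!%:R)
    * poch (a - c - n%:R) k * poch c k).
  rewrite expr_div_n expr1n; field.
  by rewrite fact_neq0 pb_neq0 four_neq0 p1_neq0 p2_neq0.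
rewrite (poch_ratio_duplication le_kn p1_neq0 p2_neq0).
rewrite (poch_ratio_reflect le_kn pb_neq0) (poch_ratio_Nnat R le_kn).
rewrite -[RHS]mul1r -[X in _ = X * _](sign_prod_eq1 _ le_kn).
have -> : c + (a - c - n%:R) + (k + k)%:R = a - n%:R + (k + k)%:R by ring.
(* [ring] rejects the power with exponent [n - k]; abstract it. *)
set sign_nk := (-1) ^+ (n - k).
ring.
Qed.

Lemma Vn_Fn (R : realType) (n : nat) (x y z : R[i]) : Vn_def n x y z ->
  Vn n x y z = Fn n ((x + y + z - 4 * z - n%:R) / 2)
                    ((x + y + z - 4 * y - n%:R) / 2)
                    ((x + y + z - 4 * x - n%:R) / 2).
Proof. by move=> Vxyz; rewrite /Vn /= Rn_Fn //; congr Fn; field. Qed.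

Definition o0 : 'I_3 := @Ordinal 3 0 isT.
Definition o1 : 'I_3 := @Ordinal 3 1 isT.
Definition o2 : 'I_3 := @Ordinal 3 2 isT.

Lemma ord3P (i : 'I_3) : [\/ i = o0, i = o1 | i = o2].
Proof.
by case: i => [[|[|[|m]]] lt_i3] //; [constructor 1|constructor 2|constructor 3];
  apply: val_inj.
Qed.

Lemma S3_ind (P : 'S_3 -> Prop) :
  P 1%g -> (forall s, P s -> P (tperm o0 o1 * s)%g) ->
  (forall s, P s -> P (tperm o1 o2 * s)%g) -> forall s, P s.
Proof.
move=> P1 P01 P12.
have P02 s : P s -> P (tperm o0 o2 * s)%g.
  have -> : tperm o0 o2 = (tperm o0 o1 * (tperm o1 o2 * tperm o0 o1))%g.
    by rewrite -(@tpermJ_tperm _ o1 o0 o2) // conjgE tpermV tpermC.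
  by move=> Ps; rewrite -!mulgA; apply/P01/P12/P01.
have Ptperm i j s : P s -> P (tperm i j * s)%g.
  by case: (ord3P i) (ord3P j) => -> [] ->; rewrite ?tperm1 ?mul1g //;
    first [by auto | by rewrite tpermC; auto].
move=> s; have [ts -> _] := prod_tpermP s.
by elim: ts => [|t ts IHts]; rewrite ?big_nil ?big_cons; auto.
Qed.

Section S3Action.
Variables (R : realType) (n : nat).
Local Notation C := R[i].
Local Notation triple := (C * C * C)%type.

Definition uvw_of (t : triple) : triple :=
  let: (a, b, c) := t in (c, a - c - n%:R, 1 - b - n%:R).

Definition abc_of (t : triple) : triple :=
  let: (u, v, w) := t in (u + v + n%:R, 1 - w - n%:R, u).

Definition coord3 (t : triple) (i : 'I_3) : C :=
  match nat_of_ord i with 0 => t.1.1 | 1 => t.1.2 | _ => t.2 end.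

Definition permute3 (s : 'S_3) (t : triple) : triple :=
  (coord3 t (s o0), coord3 t (s o1), coord3 t (s o2)).

Definition Tperm (s : 'S_3) : triple -> triple := abc_of \o permute3 s \o uvw_of.

Lemma uvw_ofK : cancel abc_of uvw_of.
Proof. by case=> [[u v] w] /=; congr (_, _, _); ring. Qed.

Lemma abc_ofK : cancel uvw_of abc_of.
Proof. by case=> [[a b] c] /=; congr (_, _, _); ring. Qed.

Lemma coord3_permute3 s t i : coord3 (permute3 s t) i = coord3 t (s i).
Proof. by case: (ord3P i) => ->. Qed.

Lemma permute3M s s' t : permute3 (s * s')%g t = permute3 s (permute3 s' t).
Proof. by rewrite /permute3 !coord3_permute3 !permM. Qed.

Lemma TpermM s s' : Tperm (s * s')%g =1 Tperm s \o Tperm s'.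
Proof. by move=> t; rewrite /Tperm /comp uvw_ofK permute3M. Qed.

Lemma Tperm1 : Tperm 1%g =1 id.
Proof.
have permute3_1 t : permute3 1%g t = t.
  by case: t => [[u v] w]; rewrite /permute3 !perm1.
by move=> t; rewrite /Tperm /comp permute3_1 abc_ofK.
Qed.

Lemma Tperm_inj s s' : Tperm s =1 Tperm s' -> s = s'.
Proof.
have coord3_nat i : coord3 (0%:R, 1%:R, 2%:R) i = (val i)%:R.
  by case: (ord3P i) => ->.
move=> /(_ (abc_of (0%:R, 1%:R, 2%:R))) /(congr1 uvw_of).
rewrite /Tperm /comp !uvw_ofK.
rewrite /permute3 !coord3_nat => -[E0 E1 E2].
apply/permP => i; apply/val_inj/eqP; rewrite -(eqr_nat C).
by case: (ord3P i) => ->; apply/eqP.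
Qed.

Lemma Tperm_T1 : Tperm (tperm o0 o1) =1 T1 n.
Proof.
case=> [[a b] c]; rewrite /Tperm /= /permute3 tpermL tpermR tpermD // /coord3 /=.
by congr (_, _, _); ring.
Qed.

Lemma Tperm_T2 : Tperm (tperm o1 o2) =1 T2 n.
Proof.
case=> [[a b] c]; rewrite /Tperm /= /permute3 tpermL tpermR tpermD // /coord3 /=.
by congr (_, _, _); ring.
Qed.

Lemma gen_T_ext (g h : triple -> triple) : gen_T n g -> g =1 h -> gen_T n h.
Proof. by move=> gen_g /functional_extensionality <-. Qed.

Lemma gen_T_Tperm s : gen_T n (Tperm s).
Proof.
elim/S3_ind: s => [|s gen_s|s gen_s].
- exact: gen_T_ext (gen_id _ _) (fsym Tperm1).
- by apply: gen_T_ext (gen_1 gen_s) _ => t; rewrite TpermM /comp Tperm_T1.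
- by apply: gen_T_ext (gen_2 gen_s) _ => t; rewrite TpermM /comp Tperm_T2.
Qed.

Lemma gen_T_Tperm_surj (g : triple -> triple) :
  gen_T n g -> exists s, Tperm s =1 g.
Proof.
elim=> [|h _ [s Ts]|h _ [s Ts]]; first by exists 1%g; apply: Tperm1.
- by exists (tperm o0 o1 * s)%g => t; rewrite TpermM /comp Ts Tperm_T1.
- by exists (tperm o1 o2 * s)%g => t; rewrite TpermM /comp Ts Tperm_T2.
Qed.

End S3Action.
Theorem mainTheorem12 (R : realType) (n : nat) :
  (* the group generated by T1, T2 is isomorphic to S_3 *)
  (   exists f : 'S_3 -> (R[i] * R[i] * R[i] -> R[i] * R[i] * R[i]),
     (forall s t, f s =1 f t -> s = t) /\
     (forall s t, f (s * t)%g =1 f s \o f t) /\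
     (forall s, gen_T (R:=R) n (f s)) /\
     (forall g, gen_T (R:=R) n g -> exists s, f s =1 g)) /\
  (* the six invariances *)
  (forall a b c : R[i], Rn_def n a b c ->
     (Rn_def n a b (a - c - n%:R) -> Rn n a b c = Rn n a b (a - c - n%:R)) /\
     (Rn_def n (1 + c - b) (1 + c - a) c ->
        Rn n a b c = Rn n (1 + c - b) (1 + c - a) c) /\
     (Rn_def n (1 + c - b) (1 + c - a) (1 - b - n%:R) ->
        Rn n a b c = Rn n (1 + c - b) (1 + c - a) (1 - b - n%:R)) /\
     (Rn_def n (1 + a - b - c - n%:R) (1 - c - n%:R) (a - c - n%:R) ->
        Rn n a b c = Rn n (1 + a - b - c - n%:R) (1 - c - n%:R) (a - c - n%:R)) /\
     (Rn_def n (1 + a - b - c - n%:R) (1 - c - n%:R) (1 - b - n%:R) ->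
        Rn n a b c = Rn n (1 + a - b - c - n%:R) (1 - c - n%:R) (1 - b - n%:R))) /\
  (* V_n is symmetric in x, y, z *)
  (forall x y z : R[i], Vn_def n x y z ->
     (Vn_def n y x z -> Vn n x y z = Vn n y x z) /\
     (Vn_def n x z y -> Vn n x y z = Vn n x z y) /\
     (Vn_def n z y x -> Vn n x y z = Vn n z y x) /\
     (Vn_def n y z x -> Vn n x y z = Vn n y z x) /\
     (Vn_def n z x y -> Vn n x y z = Vn n z x y)).
Proof.
split.
  exists (Tperm n); split; first exact: Tperm_inj.
  split; first exact: TpermM.
  split; first exact: gen_T_Tperm.
  exact: gen_T_Tperm_surj.
split=> [a b c Rabc | x y z Vxyz].
  split; [|split; [|split; [|split]]] => Rdef; rewrite !Rn_Fn //.
  - by rewrite Fn_sym12; congr Fn; ring.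
  - by rewrite Fn_sym23; congr Fn; ring.
  - by rewrite Fn_sym23 Fn_sym12; congr Fn; ring.
  - by rewrite Fn_sym12 Fn_sym23; congr Fn; ring.
  - by rewrite Fn_sym12 Fn_sym23 Fn_sym12; congr Fn; ring.
split; [|split; [|split; [|split]]] => Vdef; rewrite !Vn_Fn //.
- by rewrite Fn_sym23; congr Fn; ring.
- by rewrite Fn_sym12; congr Fn; ring.
- by rewrite Fn_sym12 Fn_sym23 Fn_sym12; congr Fn; ring.
- by rewrite Fn_sym23 Fn_sym12; congr Fn; ring.
- by rewrite Fn_sym12 Fn_sym23; congr Fn; ring.
Qed.
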